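(* Let $G$ be an abelian group, $n$ an integer, $X$ a metric compactum, $A\subset X$ a carrier of a nonzero element $\alpha\in\check{H}^n(X;G)$, and $B\subset X$ closed. Let $j_A:A\hookrightarrow A\cup B$ and $j_B:B\hookrightarrow A\cup B$ be the inclusions, and $j_A^*,j_B^*$ the induced homomorphisms on $\check{H}^n(\,\cdot\,;G)$. Then $A\subset B$ if and only if $\ker(j_B^* )\subset\ker(j_A^* )$.
   Context: $\check{H}^k(\,\cdot\,;G)$ is reduced Čech cohomology. For closed $A\subset X$, $i_A:A\hookrightarrow X$ is the inclusion. A closed nonempty set $A\subset X$ is a (cohomological) carrier of a nonzero $\alpha\in\check{H}^n(X;G)$ if $i_A^*(\alpha)\neq0$ and $i_B^*(\alpha)=0$ for every proper closed subset $B\subsetneq A$. *)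

From HB Require Import structures.
From mathcomp Require Import all_boot all_algebra.
From Stdlib Require Import Reals ZArith.
Set Implicit Arguments. Unset Strict Implicit. Unset Printing Implicit Defensive.
Import GRing.Theory.

Definition is_metric {X : Type} (d : X -> X -> R) : Prop :=
  (forall x y, Rle 0 (d x y)) /\
  (forall x y, d x y = 0%R <-> x = y) /\
  (forall x y, d x y = d y x) /\
  (forall x y z, Rle (d x z) (Rplus (d x y) (d y z))).

Definition is_open {X : Type} (d : X -> X -> R) (U : X -> Prop) : Prop :=
  forall x, U x -> exists eps, Rlt 0 eps /\ forall y, Rlt (d x y) eps -> U y.

Definition is_closed {X : Type} (d : X -> X -> R) (A : X -> Prop) : Prop :=
  is_open d (fun x => ~ A x).

Definition is_compact {X : Type} (d : X -> X -> R) : Prop :=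
  forall (I : Type) (U : I -> X -> Prop), (forall i, is_open d (U i)) ->
    (forall x, exists i, U i x) ->
    exists l : list I, forall x, exists i, List.In i l /\ U i x.

Record fcover {X : Type} (d : X -> X -> R) := FCover {
  fc_n : nat;
  fc_set : 'I_fc_n -> X -> Prop;
  fc_open : forall i, is_open d (fc_set i);
  fc_cov : forall x, exists i, fc_set i x }.
Arguments fc_n {X d} f.
Arguments fc_set {X d} f _ _.

(* an (m-1)-simplex of the nerve of U restricted to Y (ordered Cech simplices) *)
Definition is_simplex {X : Type} (Y : X -> Prop) (k m : nat)
    (U : 'I_k -> X -> Prop) (s : {ffun 'I_m -> 'I_k}) : Prop :=
  exists x, Y x /\ forall j, U (s j) x.

(* cochains of degree m-1 (m = degree + 1); m = 0 is the augmentation degree -1 *)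
Definition cochain (G : zmodType) (k m : nat) := {ffun 'I_m -> 'I_k} -> G.

Definition face (k m : nat) (i : 'I_m.+1) (s : {ffun 'I_m.+1 -> 'I_k})
  : {ffun 'I_m -> 'I_k} := [ffun j => s (lift i j)].

Definition cobd (G : zmodType) (k m : nat) (c : cochain G k m)
  : cochain G k m.+1 :=
  fun s => \big[@GRing.add G/GRing.zero]_(i < m.+1)
     (if odd i then GRing.opp (c (face i s)) else c (face i s)).

Definition is_cocycle (G : zmodType) {X : Type} (Y : X -> Prop) (k m : nat)
    (U : 'I_k -> X -> Prop) (c : cochain G k m) : Prop :=
  forall s, is_simplex Y U s -> cobd c s = GRing.zero.

Definition is_coboundary (G : zmodType) {X : Type} (Y : X -> Prop) (k : nat)
    (U : 'I_k -> X -> Prop) (m : nat) : cochain G k m -> Prop :=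
  match m return cochain G k m -> Prop with
  | 0 => fun c => forall s, is_simplex Y U s -> c s = GRing.zero
  | m'.+1 => fun c => exists b : cochain G k m',
                 forall s, is_simplex Y U s -> c s = cobd b s
  end.

Definition refines {X : Type} {d : X -> X -> R} (V U : fcover d)
    (p : 'I_(fc_n V) -> 'I_(fc_n U)) : Prop :=
  forall j x, fc_set V j x -> fc_set U (p j) x.

Arguments refines {X d} V U p.

Definition pull (G : zmodType) (kV kU m : nat) (p : 'I_kV -> 'I_kU)
    (c : cochain G kU m) : cochain G kV m :=
  fun s => c [ffun j => p (s j)].

(** A class is represented by a finite open cover U of X and a cocycle c of
   degree n on the nerve of U restricted to Y (m = n+1).  Restriction along an
   inclusion Y' ⊆ Y uses the same representative on the smaller nerve. *)
Definition dg (n : Z) : nat := Z.to_nat (n + 1).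

Definition cech_cocycle (G : zmodType) {X : Type} {d : X -> X -> R}
    (Y : X -> Prop) (n : Z) (U : fcover d) (c : cochain G (fc_n U) (dg n))
  : Prop := is_cocycle Y (fc_set U) c.

(* the class of (U, c) in Ȟ^n(Y;G) is zero (Ȟ^n = 0 for n < 0) *)
Definition cech_zero (G : zmodType) {X : Type} {d : X -> X -> R}
    (Y : X -> Prop) (n : Z) (U : fcover d) (c : cochain G (fc_n U) (dg n))
  : Prop :=
  (n < 0)%Z \/
  exists (V : fcover d) (p : 'I_(fc_n V) -> 'I_(fc_n U)),
    refines V U p /\ is_coboundary Y (fc_set V) (pull p c).

Arguments cech_cocycle {G X d} Y n U c.
Arguments cech_zero {G X d} Y n U c.

Definition is_carrier (G : zmodType) {X : Type} (d : X -> X -> R) (n : Z)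
    (U : fcover d) (alpha : cochain G (fc_n U) (dg n)) (A : X -> Prop) : Prop :=
  ~ cech_zero (fun _ => True) n U alpha /\
  is_closed d A /\ (exists x, A x) /\
  ~ cech_zero A n U alpha /\
  forall B : X -> Prop, is_closed d B -> (forall x, B x -> A x) ->
    (exists x, A x /\ ~ B x) -> cech_zero B n U alpha.
Arguments is_carrier {G X} d n U alpha A.

From HB Require Import structures.
From mathcomp Require Import all_boot all_algebra.
From Stdlib Require Import Reals ZArith.
From Stdlib Require Import Lra List Classical ClassicalEpsilon.
From mathcomp Require Import zify.
Set Implicit Arguments. Unset Strict Implicit. Unset Printing Implicit Defensive.
Import GRing.Theory.

(* If A is contained in B, restriction from A ∪ B = B to A factors through B.
   Conversely, suppose A is not contained in B.  Then A ∩ B is a proper closed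
   subset of the carrier A, so α restricted to A ∩ B is zero: on a refinement
   V0 of the cover, α = δb on the simplices meeting A ∩ B.  Shrink V0, by
   compactness, to finitely many open balls whose closures refine it.  Then
   g = α - δb ([corrected_alpha]) is a cocycle that vanishes on every simplex
   whose closed balls meet A ∩ B, and the points of A lying in the remaining
   closed-ball simplices form a closed set F ([bad_set]) disjoint from B.
   Cover A ∪ B by two sheets, the balls minus B and the balls minus F, and let
   β be g on simplices whose first vertex lies in the first sheet and 0
   otherwise.  β is a cocycle on A ∪ B,
   it vanishes on B, and on A it differs from α by a coboundary; so the kernel
   inclusion makes α vanish on A, contradicting that A carries α. *)

Section Coboundary.
Variable G : zmodType.
Local Open Scope ring_scope.

Definition signed (b : bool) (x : G) : G := if b then - x else x.

Lemma signedN b x : signed (~~ b) x = - signed b x.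
Proof. by case: b; rewrite /signed /= ?opprK. Qed.

Lemma signed_signed b b' x : signed b (signed b' x) = signed (b (+) b') x.
Proof. by case: b; case: b'; rewrite /signed /= ?opprK. Qed.

Lemma signed_sum b (I : finType) (F : I -> G) :
  signed b (\sum_i F i) = \sum_i signed b (F i).
Proof. by case: b; rewrite /signed // -sumrN. Qed.

(* The involution of the index pairs of [cobd (cobd c)] matching the two
   ways [face j (face i s)] of deleting the same two vertices. *)
Definition swap_faces m (x : 'I_m.+2 * 'I_m.+1) : 'I_m.+2 * 'I_m.+1 :=
  if (x.2 < x.1)%nat then (inord x.2, inord x.1.-1)
  else (inord x.2.+1, inord x.1).

Lemma swap_facesK m : involutive (@swap_faces m).
Proof.
case=> i j; rewrite /swap_faces /=.
have hi := ltn_ord i; have hj := ltn_ord j.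
case: (ltnP j i) => h /=.
- rewrite (@inordK _ j) ?(@inordK _ i.-1); try lia.
  have -> : (i.-1 < j)%nat = false by lia.
  by congr pair; apply: val_inj; rewrite /= ?inordK; lia.
- rewrite (@inordK _ j.+1) ?(@inordK _ i); try lia.
  have -> : (i < j.+1)%nat = true by lia.
  by congr pair; apply: val_inj; rewrite /= ?inordK; lia.
Qed.

Lemma lift_liftC m (i : 'I_m.+2) (j : 'I_m.+1) (i' : 'I_m.+1) (j' : 'I_m.+2)
  (k : 'I_m) : (j < i)%nat -> j' = j :> nat -> i' = i.-1 :> nat ->
  lift i (lift j k) = lift j' (lift i' k).
Proof.
move=> ji ej ei; apply: val_inj => /=; rewrite ej ei /bump.
by case: (leqP j k) => h1; case: (leqP i.-1 k) => h2 /=;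
  try (case: (leqP i _) => h3); try (case: (leqP j _) => h4); lia.
Qed.

Lemma cobd_cobd k m (c : cochain G k m) s : cobd (cobd c) s = 0.
Proof.
rewrite /cobd.
have signed_inner (i : 'I_m.+2) : signed (odd i) (\sum_(j < m.+1)
      signed (odd j) (c (face j (face i s))))
   = \sum_(j < m.+1) signed (odd i (+) odd j) (c (face j (face i s))).
  by rewrite signed_sum; apply: eq_bigr => j _; rewrite signed_signed.
rewrite (eq_bigr _ (fun i _ => signed_inner i)) pair_big /=.
rewrite (bigID (fun x : 'I_m.+2 * 'I_m.+1 => (x.2 < x.1)%nat)) /=.
rewrite (reindex_inj (inv_inj (@swap_facesK m))) /=.
rewrite (eq_bigl (fun x : 'I_m.+2 * 'I_m.+1 => ~~ (x.2 < x.1)%nat)); last first.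
  case=> i j /=; rewrite /swap_faces /=.
  have hi := ltn_ord i; have hj := ltn_ord j.
  by case: (ltnP j i) => h /=; rewrite !inordK; lia.
rewrite -big_split /=; apply: big1 => [[i j]] /= h.
rewrite /swap_faces /= (negbTE h).
have hi := ltn_ord i; have hj := ltn_ord j.
have -> : face (inord i) (face (inord j.+1) s) = face j (face i s).
  apply/ffunP => k0; rewrite /face !ffunE; congr (s _).
  by apply: lift_liftC; rewrite ?inordK; lia.
rewrite (@inordK _ j.+1) ?(@inordK _ i); try lia.
by rewrite -[odd j.+1]/(~~ odd j) addNb addbC signedN addNr.
Qed.

Lemma face_map k k' m (f : 'I_k -> 'I_k') (i : 'I_m.+1)
  (s : {ffun 'I_m.+1 -> 'I_k}) :
  face i [ffun j => f (s j)] = [ffun j => f (face i s j)].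
Proof. by apply/ffunP => j; rewrite /face !ffunE. Qed.

Lemma cobd_pull k k' m (f : 'I_k -> 'I_k') (c : cochain G k' m) s :
  cobd (pull f c) s = cobd c [ffun j => f (s j)].
Proof. by apply: eq_bigr => i _; rewrite /pull -face_map. Qed.

Lemma cobdD k m (c1 c2 : cochain G k m) s :
  cobd (fun u => c1 u + c2 u) s = cobd c1 s + cobd c2 s.
Proof.
by rewrite /cobd -big_split; apply: eq_bigr => i _; case: (odd i); rewrite ?opprD.
Qed.

Lemma cobdB k m (c1 c2 : cochain G k m) s :
  cobd (fun u => c1 u - c2 u) s = cobd c1 s - cobd c2 s.
Proof.
rewrite /cobd -sumrB; apply: eq_bigr => i _.
by case: (odd i); rewrite ?opprB ?opprD ?opprK // addrC.
Qed.

Lemma cobd0 k m s : cobd (fun _ : {ffun 'I_m -> 'I_k} => 0 : G) s = 0.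
Proof. by apply: big1 => i _; case: (odd i); rewrite ?oppr0. Qed.

Lemma cobd_cutoff k k' m (P : pred 'I_k') (f : 'I_k' -> 'I_k)
  (g : cochain G k m.+1) (s : {ffun 'I_m.+2 -> 'I_k'}) :
  let t := [ffun j => f (s j)] in
  cobd (fun u => if P (u ord0) then g [ffun j => f (u j)] else 0) s =
  (if P (s (lift ord0 ord0)) then g (face ord0 t) else 0) +
  (if P (s ord0) then cobd g t - g (face ord0 t) else 0).
Proof.
move=> t; rewrite /cobd big_ord_recl /=; congr (_ + _).
  by rewrite /face ffunE -face_map.
have first_vertex (i : 'I_m.+1) : face (lift ord0 i) s ord0 = s ord0.
  by rewrite /face ffunE; congr (s _); apply: val_inj.
case: ifP => Ps0.
  rewrite [in RHS]big_ord_recl /= addrAC subrr add0r; apply: eq_bigr => i _.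
  by rewrite first_vertex Ps0 -face_map.
by apply: big1 => i _; rewrite first_vertex Ps0; case: (odd _); rewrite ?oppr0.
Qed.

End Coboundary.

Section MetricTopology.
Variables (X : Type) (d : X -> X -> R).
Hypothesis hd : is_metric d.

Lemma open_ball c r : is_open d (fun y => Rlt (d c y) r).
Proof.
move=> x hx; exists (Rminus r (d c x)); split; first lra.
by move=> y hy; case: hd => _ [_ [_ tri]]; have := tri c x y; lra.
Qed.

Lemma closed_ball c r : is_closed d (fun y => Rle (d c y) r).
Proof.
move=> x /Rnot_le_lt hx; exists (Rminus (d c x) r); split; first lra.
move=> y hy; case: hd => _ [_ [sym tri]]; have := tri c y x.
by rewrite (sym y x); lra.
Qed.

Lemma openI (P Q : X -> Prop) : is_open d P -> is_open d Q ->
  is_open d (fun x => P x /\ Q x).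
Proof.
move=> hP hQ x [Px Qx].
case: (hP x Px) => e1 [e1p h1]; case: (hQ x Qx) => e2 [e2p h2].
exists (Rmin e1 e2); split; first exact: Rmin_glb_lt.
move=> y hy; split; [apply: h1 | apply: h2];
  [exact: Rlt_le_trans hy (Rmin_l _ _) | exact: Rlt_le_trans hy (Rmin_r _ _)].
Qed.

Lemma open_bigcap (T : finType) (Q : T -> X -> Prop) :
  (forall t, is_open d (Q t)) -> is_open d (fun x => forall t, Q t x).
Proof.
move=> hQ x Qx.
suff [e [ep he]] : exists e, Rlt 0 e /\
    forall t, t \in enum T -> forall y, Rlt (d x y) e -> Q t y.
  by exists e; split => // y hy t; apply: he; rewrite ?mem_enum.
elim: (enum T) => [|t l [e [ep he]]]; first by exists 1%R; split => //; lra.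
case: (hQ t x (Qx t)) => e1 [e1p h1].
exists (Rmin e e1); split; first exact: Rmin_glb_lt.
move=> t'; rewrite inE => /orP [/eqP -> | ht] y hy.
  by apply: h1; apply: Rlt_le_trans hy (Rmin_r _ _).
by apply: he => //; apply: Rlt_le_trans hy (Rmin_l _ _).
Qed.

Lemma closedI (P Q : X -> Prop) : is_closed d P -> is_closed d Q ->
  is_closed d (fun x => P x /\ Q x).
Proof.
move=> hP hQ x PQx; case: (classic (P x)) => Px.
  have [e [ep he]] := hQ x (fun Qx => PQx (conj Px Qx)).
  by exists e; split => // y /he nQy [].
have [e [ep he]] := hP x Px.
by exists e; split => // y /he nPy [].
Qed.

Lemma closed_bigcap (I : Type) (Q : I -> X -> Prop) :
  (forall i, is_closed d (Q i)) -> is_closed d (fun x => forall i, Q i x).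
Proof.
move=> hQ x /not_all_ex_not [i nQx]; have [e [ep he]] := hQ i x nQx.
by exists e; split => // y /he nQy /(_ i).
Qed.

Lemma closed_bigcup (T : finType) (Q : T -> X -> Prop) :
  (forall t, is_closed d (Q t)) -> is_closed d (fun x => exists t, Q t x).
Proof.
move=> hQ x nQx.
have [e [ep he]] := open_bigcap hQ (fun t Qx => nQx (ex_intro _ t Qx)).
by exists e; split => // y /he nQy [t]; apply: nQy.
Qed.

Lemma closed_guard (P : Prop) (Q : X -> Prop) :
  is_closed d Q -> is_closed d (fun x => P /\ Q x).
Proof.
move=> hQ x PQx; case: (classic P) => hP.
  have [e [ep he]] := hQ x (fun Qx => PQx (conj hP Qx)).
  by exists e; split => // y /he nQy [].
by exists 1%R; split => [|y _ []]; [lra|].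
Qed.

(* [a] only serves as the default element for [nth]. *)
Lemma ball_refinement (hc : is_compact d) (V : fcover d) (a : X) :
  exists k (c : 'I_k -> X) (r : 'I_k -> R) (q : 'I_k -> 'I_(fc_n V)),
    (forall j y, Rle (d (c j) y) (r j) -> fc_set V (q j) y) /\
    (forall x, exists j, Rlt (d (c j) x) (r j)).
Proof.
have choice_ball x : { ie : 'I_(fc_n V) * R | Rlt 0 ie.2 /\
    forall y, Rlt (d x y) ie.2 -> fc_set V ie.1 y }.
  apply: constructive_indefinite_description.
  case: (fc_cov V x) => i hi; case: (fc_open hi) => e [ep he].
  by exists (i, e).
pose idx x := (proj1_sig (choice_ball x)).1.
pose rad x := Rdiv (proj1_sig (choice_ball x)).2 2.
have radK x y : Rle (d x y) (rad x) -> fc_set V (idx x) y.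
  rewrite /rad /idx; case: (proj2_sig (choice_ball x)) => h1 h2 hy.
  by apply: h2; lra.
have [l hl] : exists l : list X,
    forall x, exists y, In y l /\ Rlt (d y x) (rad y).
  apply: (hc X (fun x y => Rlt (d x y) (rad x)) (fun x => @open_ball x (rad x))).
  move=> x; exists x; case: hd => _ [h0 _]; rewrite (proj2 (h0 x x) erefl).
  by rewrite /rad; case: (proj2_sig (choice_ball x)) => h _; lra.
exists (length l), (fun j => nth j l a), (fun j => rad (nth j l a)),
  (fun j => idx (nth j l a)); split => [j y|x]; first exact: radK.
case: (hl x) => y [iny hy]; case: (In_nth l y a iny) => j [hj ey].
by exists (Ordinal (introT ltP hj)); rewrite /= ey.
Qed.

End MetricTopology.

(* For [n >= 0] this is [cech_zero Y n U c] without its [n < 0] disjunct. *)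
Definition restricts_to_zero (G : zmodType) (X : Type) (d : X -> X -> R)
    (Y : X -> Prop) (U : fcover d) m (c : cochain G (fc_n U) m) : Prop :=
  exists (V : fcover d) (p : 'I_(fc_n V) -> 'I_(fc_n U)),
    refines V U p /\ is_coboundary Y (fc_set V) (pull p c).
Arguments restricts_to_zero {G X d} Y U {m} c.

Section Restriction.
Local Open Scope ring_scope.

Lemma is_coboundary_sub (G : zmodType) (X : Type) (Y Y' : X -> Prop) k
  (Vs : 'I_k -> X -> Prop) m (c : cochain G k m) :
  (forall x, Y' x -> Y x) -> is_coboundary Y Vs c -> is_coboundary Y' Vs c.
Proof.
move=> sub; case: m c => [|m] c /= => [h | [b hb]]; last exists b;
  move=> s [x [Y'x hs]]; [apply: h | apply: hb]; exists x; split => //; exact: sub.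
Qed.

Lemma restricts_to_zero_sub (G : zmodType) (X : Type) (d : X -> X -> R)
  (Y Y' : X -> Prop) (U : fcover d) m (c : cochain G (fc_n U) m) :
  (forall x, Y' x -> Y x) -> restricts_to_zero Y U c -> restricts_to_zero Y' U c.
Proof.
by move=> sub [V [p [hp hc]]]; exists V, p; split => //; exact: is_coboundary_sub hc.
Qed.

Lemma restricts_to_zero_vanishing (G : zmodType) (X : Type) (d : X -> X -> R)
  (Y : X -> Prop) (U : fcover d) m (c : cochain G (fc_n U) m.+1) :
  (forall s, is_simplex Y (fc_set U) s -> c s = 0) -> restricts_to_zero Y U c.
Proof.
move=> c0; exists U, (fun i => i); split=> [//|]; exists (fun _ => 0) => s hs.
rewrite cobd0 /pull; have -> : [ffun j => s j] = s by apply/ffunP => j; rewrite ffunE.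
exact: c0.
Qed.

End Restriction.

Section Extension.
Local Open Scope ring_scope.
Variables (G : zmodType) (X : Type) (d : X -> X -> R).
Hypothesis hd : is_metric d.
Variables (m : nat) (U : fcover d) (alpha : cochain G (fc_n U) m.+1).
Hypothesis alpha_cocycle : is_cocycle (fun _ => True) (fc_set U) alpha.
Variables (A B : X -> Prop).
Hypotheses (A_closed : is_closed d A) (B_closed : is_closed d B).
Variables (V0 : fcover d) (p : 'I_(fc_n V0) -> 'I_(fc_n U)).
Variable b : cochain G (fc_n V0) m.
Hypothesis p_refines : refines V0 U p.
Hypothesis alpha_AB : forall s,
  is_simplex (fun x => A x /\ B x) (fc_set V0) s -> pull p alpha s = cobd b s.
Variables (k : nat) (c : 'I_k -> X) (r : 'I_k -> R) (q : 'I_k -> 'I_(fc_n V0)).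
Hypothesis cball_sub : forall j y, Rle (d (c j) y) (r j) -> fc_set V0 (q j) y.
Hypothesis balls_cover : forall x, exists j, Rlt (d (c j) x) (r j).

Definition oball j y := Rlt (d (c j) y) (r j).
Definition cball j y := Rle (d (c j) y) (r j).

Lemma oball_cball j y : oball j y -> cball j y.
Proof. by rewrite /oball /cball; lra. Qed.

Definition meets_AB (u : {ffun 'I_m.+1 -> 'I_k}) :=
  exists y, A y /\ B y /\ forall j, cball (u j) y.

Definition bad_set x :=
  A x /\ exists u, ~ meets_AB u /\ forall j, cball (u j) x.

Lemma bad_set_closed : is_closed d bad_set.
Proof.
apply: closedI => //; apply: closed_bigcup => u; apply: closed_guard.
by apply: closed_bigcap => j; apply: closed_ball.
Qed.

Lemma bad_set_disjoint x : bad_set x -> ~ B x.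
Proof. by move=> [Ax [u [nmeet hu]]] Bx; apply: nmeet; exists x. Qed.

Definition sheet (i : 'I_(k + k)) : bool := (i < k)%nat.

Definition base (i : 'I_(k + k)) : 'I_k :=
  match fintype.split i with inl j => j | inr j => j end.

(* Two sheets of balls: index [j] is ball [j] minus B, index [k + j] is ball
   [j] minus [bad_set]. *)
Definition ext_set i x :=
  oball (base i) x /\ (if sheet i then ~ B x else ~ bad_set x).

Lemma ext_set_open i : is_open d (ext_set i).
Proof.
apply: openI; first exact: open_ball.
by case: (sheet i); [apply: B_closed | apply: bad_set_closed].
Qed.

Lemma ext_set_cover x : exists i, ext_set i x.
Proof.
have [j hj] := balls_cover x.
case: (classic (B x)) => Bx.
- exists (rshift k j); rewrite /ext_set /base /sheet (unsplitK (inr j : 'I_k + 'I_k)).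
  split=> //=; have -> : (k + j < k)%nat = false by lia.
  by move/bad_set_disjoint.
- exists (lshift k j); rewrite /ext_set /base /sheet (unsplitK (inl j : 'I_k + 'I_k)).
  by split=> //=; rewrite ltn_ord.
Qed.

Definition ext_cover : fcover d := FCover ext_set_open ext_set_cover.

Definition corrected_alpha (u : {ffun 'I_m.+1 -> 'I_k}) : G :=
  pull q (pull p alpha) u - cobd (pull q b) u.

Lemma corrected_alpha_cocycle (t : {ffun 'I_m.+2 -> 'I_k}) x :
  (forall j, oball (t j) x) -> cobd corrected_alpha t = 0.
Proof.
move=> ht; rewrite cobdB cobd_cobd subr0 !cobd_pull.
apply: alpha_cocycle; exists x; split => // j; rewrite !ffunE.
by apply: p_refines; apply: cball_sub; apply: oball_cball.
Qed.

Lemma corrected_alpha_meets_AB (u : {ffun 'I_m.+1 -> 'I_k}) :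
  meets_AB u -> corrected_alpha u = 0.
Proof.
move=> [y [Ay [By hu]]]; rewrite /corrected_alpha cobd_pull -alpha_AB.
  exact: subrr.
by exists y; split => // j; rewrite ffunE; exact: cball_sub (hu j).
Qed.

Lemma corrected_alpha_off_bad_set (u : {ffun 'I_m.+1 -> 'I_k}) x :
  A x -> ~ bad_set x -> (forall j, cball (u j) x) -> corrected_alpha u = 0.
Proof.
move=> Ax nbad hu; apply: corrected_alpha_meets_AB; apply: NNPP => nmeet.
by apply: nbad; split=> //; exists u.
Qed.

Definition ext_cochain (s : {ffun 'I_m.+1 -> 'I_(k + k)}) : G :=
  if sheet (s ord0) then corrected_alpha [ffun j => base (s j)] else 0.

Lemma ext_cochain_cocycle :
  is_cocycle (fun x => A x \/ B x) (fc_set ext_cover) ext_cochain.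
Proof.
move=> s [x [ABx hs]]; rewrite cobd_cutoff /=.
set t := [ffun j => base (s j)].
have ht j : oball (t j) x by rewrite ffunE; case: (hs j).
rewrite (corrected_alpha_cocycle ht) sub0r.
(* A face whose first two vertices lie in different sheets lives off B and off
   [bad_set], i.e. in A away from [bad_set]. *)
have mixed : ~ B x -> ~ bad_set x -> corrected_alpha (face ord0 t) = 0.
  move=> nBx nbad; apply: (corrected_alpha_off_bad_set _ nbad) => [|j].
    by case: ABx.
  by rewrite /face ffunE; apply/oball_cball/ht.
have [_ h1] := hs (lift ord0 ord0); have [_ h0] := hs ord0.
case: (sheet (s (lift ord0 ord0))) h1; case: (sheet (s ord0)) h0 => /= h0 h1.
- by rewrite addrN.
- by rewrite addr0 mixed.
- by rewrite add0r mixed ?oppr0.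
- by rewrite addr0.
Qed.

Lemma ext_cochain_B (s : {ffun 'I_m.+1 -> 'I_(k + k)}) :
  is_simplex B (fc_set ext_cover) s -> ext_cochain s = 0.
Proof.
by move=> [x [Bx hs]]; rewrite /ext_cochain; have [_] := hs ord0; case: sheet.
Qed.

Lemma ext_cochain_A (s : {ffun 'I_m.+1 -> 'I_(k + k)}) x :
  A x -> (forall j, ext_set (s j) x) ->
  ext_cochain s = corrected_alpha [ffun j => base (s j)].
Proof.
move=> Ax hs; rewrite /ext_cochain; have [_] := hs ord0; case: sheet => // nbad.
rewrite (corrected_alpha_off_bad_set Ax nbad) // => j.
by rewrite ffunE; apply: oball_cball; case: (hs j).
Qed.

Lemma ext_cochain_restricts_to_zero_A :
  restricts_to_zero A ext_cover ext_cochain -> restricts_to_zero A U alpha.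
Proof.
move=> [W [p2 [hp2 [e he]]]].
pose P i := p (q (base (p2 i))).
exists W, P; split.
  move=> i x /hp2 [hx _]; exact/p_refines/cball_sub/oball_cball.
exists (fun v => pull (fun i => base (p2 i)) (pull q b) v + e v) => s hs.
rewrite cobdD cobd_pull -he //; case: hs => x [Ax hs].
set u := [ffun j => base (p2 (s j))].
rewrite /pull (@ext_cochain_A _ x Ax) => [|j]; last by rewrite ffunE; apply: hp2.
have -> : [ffun j => base ([ffun j0 => p2 (s j0)] j)] = u.
  by apply/ffunP => j; rewrite !ffunE.
rewrite /corrected_alpha /pull addrC subrK; congr alpha.
by apply/ffunP => j; rewrite !ffunE.
Qed.

End Extension.

Lemma extension_vanishing_on_B (G : zmodType) (X : Type) (d : X -> X -> R)
  (hd : is_metric d) (hc : is_compact d) m (U : fcover d)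
  (alpha : cochain G (fc_n U) m.+1)
  (halpha : is_cocycle (fun _ => True) (fc_set U) alpha)
  (A B : X -> Prop) (a : X) (hA : is_closed d A) (hB : is_closed d B) :
  restricts_to_zero (fun x => A x /\ B x) U alpha ->
  exists (W : fcover d) (beta : cochain G (fc_n W) m.+1),
    [/\ is_cocycle (fun x => A x \/ B x) (fc_set W) beta,
        restricts_to_zero B W beta &
        restricts_to_zero A W beta -> restricts_to_zero A U alpha].
Proof.
move=> [V0 [p [hp [b hb]]]].
have [k [c [r [q [hq hcov]]]]] := ball_refinement hd hc V0 a.
exists (ext_cover hd m hA hB hcov), (ext_cochain alpha p b q); split.
- exact: ext_cochain_cocycle.
- apply: restricts_to_zero_vanishing; exact: ext_cochain_B.
- exact: ext_cochain_restricts_to_zero_A.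
Qed.

Lemma dg_nonneg n : (0 <= n)%Z -> dg n = (Z.to_nat n).+1.
Proof. by rewrite /dg; lia. Qed.

Theorem lemma2p2 (G : zmodType) (n : Z) (X : Type) (d : X -> X -> R)
    (hd : is_metric d) (hc : is_compact d)
    (U : fcover d) (alpha : cochain G (fc_n U) (dg n))
    (halpha : cech_cocycle (fun _ => True) n U alpha)
    (A B : X -> Prop) (hA : is_carrier d n U alpha A) (hB : is_closed d B) :
  (forall x, A x -> B x) <->
  (forall (V : fcover d) (beta : cochain G (fc_n V) (dg n)),
     cech_cocycle (fun x => A x \/ B x) n V beta ->
     cech_zero B n V beta -> cech_zero A n V beta).
Proof.
split=> [AB V beta _ [neg | zB] | ker_sub]; first by left.
  by right; exact: restricts_to_zero_sub AB zB.
apply: NNPP => notAB.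
have [alpha_nz [A_closed [_ [alphaA_nz minimal]]]] := hA.
have [x0 [Ax0 nBx0]] : exists x, A x /\ ~ B x.
  apply: NNPP => h; apply: notAB => x Ax.
  by apply: NNPP => nBx; apply: h; exists x.
have n_ge0 : (0 <= n)%Z.
  by case: (Z.le_gt_cases 0 n) => // neg; case: alpha_nz; left; lia.
have alphaAB := minimal _ (closedI A_closed hB) (fun x => @proj1 _ _)
  (ex_intro _ x0 (conj Ax0 (fun ABx0 => nBx0 (proj2 ABx0)))).
move: alpha halpha alphaA_nz alphaAB ker_sub {hA alpha_nz minimal}.
rewrite /cech_cocycle /cech_zero dg_nonneg //.
move=> alpha halpha alphaA_nz [|alphaAB] ker_sub; first by lia.
have [W [beta [beta_cocycle betaB_zero back]]] :=
  extension_vanishing_on_B hd hc halpha x0 A_closed hB alphaAB.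
case: (ker_sub W beta beta_cocycle (or_intror betaB_zero)); first by lia.
by move=> betaA_zero; apply: alphaA_nz; right; exact: back.
Qed.
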